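(* Let $L,L'$ be finite simplicial complexes, $\varphi: L\to L'$ a surjective simplicial finite-fibration, and $n\ge2$. (i) If there is a simplicial map $\omega: L'\to L$ with $\varphi\circ\omega\sim 1_{L'}$ (a right strong equivalence), then $\mathrm{TC}_n(\varphi)=\mathrm{TC}_n(L')$. (ii) If there is a simplicial map $\gamma: L'\to L$ with $\gamma\circ\varphi\sim 1_L$ (a left strong equivalence), then $\mathrm{TC}_n(\varphi)=\mathrm{TC}_n(L)$. (iii) If $\varphi$ is a strong equivalence, then $\mathrm{TC}_n(\varphi)=\mathrm{TC}_n(L)=\mathrm{TC}_n(L')$.
   Context: Simplicial complexes are abstract and edge-path connected; $K^n$ is the $n$-fold categorical product (vertex set $\mathrm{VX}(K)^n$; a set of vertices is a simplex iff each coordinate projection is a simplex). Simplicial maps $f,g: K\to K'$ are contiguous if $f(\sigma)\cup g(\sigma)$ is a simplex for every simplex $\sigma$; $f\sim g$ if joined by a finite chain of contiguous simplicial maps. A strong equivalence $f: K\to K'$ is a simplicial map admitting a simplicial $g: K'\to K$ with $f\circ g\sim1_{K'}$ and $g\circ f\sim 1_K$. $\mathrm{SD}(\varphi_1,\dots,\varphi_m)$ for simplicial maps $K\to K'$ is the least $k\ge0$ such that $K$ is a union of subcomplexes $K_0,\dots,K_k$ with $\varphi_i|_{K_j}\sim\varphi_l|_{K_j}$ for all $i,l,j$. With $p_i: K^n\to K$ the projections, $\mathrm{TC}_n(K)=\mathrm{SD}(p_1,\dots,p_n)$ and, for surjective $\varphi: L\to L'$, $\mathrm{TC}_n(\varphi)=\mathrm{SD}(\varphi\circ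 p_1,\dots,\varphi\circ p_n)$ with $p_i: L^n\to L$. $I_m$ is the complex with vertices $0,\dots,m$ and edges $\{i,i+1\}$; $\varphi: L\to L'$ is a simplicial finite-fibration if for every finite complex $N$, $m\ge1$, inclusion $i: N\times\{0\}\to N\times I_m$ and simplicial $g: N\times\{0\}\to L$, $G: N\times I_m\to L'$ with $\varphi\circ g=G\circ i$, there is simplicial $\widetilde G$ with $\widetilde G\circ i=g$, $\varphi\circ\widetilde G=G$. *)

From Stdlib Require Import Relations ClassicalEpsilon.
From mathcomp Require Import all_boot.
Set Implicit Arguments. Unset Strict Implicit. Unset Printing Implicit Defensive.

Record sc := SC { vert : finType; simplex : pred {set vert} }.
Arguments simplex : clear implicits.

(* Axioms of an abstract simplicial complex, together with the standing
   assumption that complexes are edge-path connected. *)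
Definition is_sc (K : sc) : Prop :=
  [/\ ~~ simplex K set0,
      (forall v : vert K, simplex K [set v]),
      (forall s t : {set vert K}, simplex K s -> t \subset s -> t != set0 ->
          simplex K t)
    & (forall u v : vert K, connect [rel a b | simplex K [set a; b]] u v)].

Definition prodsc (K1 K2 : sc) : sc :=
  @SC (vert K1 * vert K2)%type
      (fun s => [&& s != set0, simplex K1 (fst @: s) & simplex K2 (snd @: s)]).

Definition powsc (K : sc) (n : nat) : sc :=
  @SC {ffun 'I_n -> vert K}
      (fun s => (s != set0) && [forall i : 'I_n, simplex K [set (x : {ffun 'I_n -> vert K}) i | x in s]]).

Definition proj (K : sc) (n : nat) (i : 'I_n) : vert (powsc K n) -> vert K :=
  fun x => x i.

(* I_m : vertices 0..m, edges {i, i+1}. *)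
Definition Isc (m : nat) : sc :=
  @SC 'I_m.+1
      (fun s => (s != set0) &&
         [forall x in s, forall y in s,
            [|| nat_of_ord x == y, (nat_of_ord x).+1 == y | (nat_of_ord y).+1 == x]]).

Definition simplicial (K K' : sc) (f : vert K -> vert K') : Prop :=
  forall s, simplex K s -> simplex K' (f @: s).

Definition subcomplex (K : sc) (P : pred {set vert K}) : Prop :=
  (forall s, P s -> simplex K s) /\
  (forall s t : {set vert K}, P s -> t \subset s -> t != set0 -> P t).

Definition contiguous_on (K K' : sc) (P : pred {set vert K})
    (f g : vert K -> vert K') : Prop :=
  (forall s, P s -> simplex K' (f @: s)) /\
  (forall s, P s -> simplex K' (g @: s)) /\
  (forall s, P s -> simplex K' (f @: s :|: g @: s)).

Definition homotopic_on (K K' : sc) (P : pred {set vert K})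
    (f g : vert K -> vert K') : Prop :=
  clos_refl_trans (vert K -> vert K') (@contiguous_on K K' P) f g.

Definition homotopic (K K' : sc) (f g : vert K -> vert K') : Prop :=
  homotopic_on (simplex K) f g.

Definition strong_equivalence (K K' : sc) (f : vert K -> vert K') : Prop :=
  simplicial f /\
  exists g : vert K' -> vert K, simplicial g /\
    homotopic (K:=K') (K':=K') (f \o g) id /\ homotopic (K:=K) (K':=K) (g \o f) id.

Definition SD_le (K K' : sc) (m : nat) (phis : 'I_m -> vert K -> vert K')
    (k : nat) : Prop :=
  exists Ks : 'I_k.+1 -> pred {set vert K},
    (forall j, subcomplex (Ks j)) /\
    (forall s, simplex K s -> exists j, Ks j s) /\
    (forall i l j, homotopic_on (Ks j) (phis i) (phis l)).

Definition is_SD (K K' : sc) (m : nat) (phis : 'I_m -> vert K -> vert K')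
    (k : nat) : Prop :=
  SD_le phis k /\ forall k', SD_le phis k' -> k <= k'.

Definition SD (K K' : sc) (m : nat) (phis : 'I_m -> vert K -> vert K') : nat :=
  epsilon (inhabits 0) (is_SD phis).

Definition TC (K : sc) (n : nat) : nat := SD (@proj K n).

Definition TCmap (L L' : sc) (phi : vert L -> vert L') (n : nat) : nat :=
  SD (fun i : 'I_n => phi \o @proj L n i).

(* Simplicial finite-fibration. N x {0} is identified with N via x |-> (x, 0). *)
Definition finite_fibration (L L' : sc) (phi : vert L -> vert L') : Prop :=
  simplicial phi /\
  forall (N : sc) (m : nat), is_sc N -> 0 < m ->
  forall (g : vert N -> vert L) (G : vert (prodsc N (Isc m)) -> vert L'),
    simplicial g -> simplicial G ->
    (forall x : vert N, phi (g x) = G (x, ord0)) ->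
    exists Gt : vert (prodsc N (Isc m)) -> vert L,
      simplicial Gt /\ (forall x : vert N, Gt (x, ord0) = g x) /\
      (forall y, phi (Gt y) = G y).

(* TC_n(phi), TC_n(L) and TC_n(L') are sectional distances SD of n maps, and SD
   does not change when the maps are replaced by homotopic ones, and cannot
   grow when they are precomposed with a simplicial map (pull the covering
   back) or postcomposed with one (contiguity is preserved). Given
   phi o omega ~ 1, the identities p_i o phi^n = phi o p_i and
   phi o p_i o omega^n = (phi o omega) o p_i ~ p_i give
   TC_n(phi) <= TC_n(L') <= TC_n(phi). Given gamma o phi ~ 1, postcomposing
   with phi and with gamma gives TC_n(phi) <= TC_n(L) <= TC_n(phi).
   Neither argument uses that phi is a surjective fibration or that n >= 2. *)
From mathcomp Require Import all_boot.
From Stdlib Require Import Relations FunctionalExtensionality PropExtensionality.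
Set Implicit Arguments. Unset Strict Implicit. Unset Printing Implicit Defensive.

Definition face_closed (K : sc) : Prop :=
  forall s t : {set vert K}, simplex K s -> t \subset s -> t != set0 -> simplex K t.

Lemma is_sc_face_closed (K : sc) : is_sc K -> face_closed K.
Proof. by case. Qed.

Section Homotopy.
Variables (K K' : sc).
Implicit Types (P Q : pred {set vert K}) (f g : vert K -> vert K').

Lemma contiguous_on_sym P f g : contiguous_on P f g -> contiguous_on P g f.
Proof. by case=> Sf [Sg Sfg]; split; [|split]=> // s Ps; rewrite setUC; apply: Sfg. Qed.

Lemma homotopic_on_sym P f g : homotopic_on P f g -> homotopic_on P g f.
Proof.
elim=> [{}f {}g fg | {}f | {}f {}g h _ IHfg _ IHgh].
- exact/rt_step/contiguous_on_sym.
- exact: rt_refl.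
- exact: rt_trans IHgh IHfg.
Qed.

Lemma homotopic_on_sub P Q f g :
  (forall s, P s -> Q s) -> homotopic_on Q f g -> homotopic_on P f g.
Proof.
move=> PQ; elim=> [{}f {}g [Sf [Sg Sfg]] | {}f | {}f {}g h _ IHfg _ IHgh].
- by apply: rt_step; split; [|split]=> s /PQ; [apply: Sf | apply: Sg | apply: Sfg].
- exact: rt_refl.
- exact: rt_trans IHfg IHgh.
Qed.

Lemma homotopic_on_comp_l (K'' : sc) P (q : vert K' -> vert K'') f g :
  simplicial q -> homotopic_on P f g -> homotopic_on P (q \o f) (q \o g).
Proof.
move=> Sq; elim=> [{}f {}g [Sf [Sg Sfg]] | {}f | {}f {}g h _ IHfg _ IHgh].
- apply: rt_step; split; [|split]=> s Ps; rewrite ?(imset_comp q f) ?(imset_comp q g).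
  + exact/Sq/Sf.
  + exact/Sq/Sg.
  + by rewrite -imsetU; apply/Sq/Sfg.
- exact: rt_refl.
- exact: rt_trans IHfg IHgh.
Qed.

Lemma homotopic_on_comp_r (K1 : sc) (P1 : pred {set vert K1}) P
    (h : vert K1 -> vert K) f g :
  (forall s, P1 s -> P (h @: s)) -> homotopic_on P f g ->
  homotopic_on P1 (f \o h) (g \o h).
Proof.
move=> Ph; elim=> [{}f {}g [Sf [Sg Sfg]] | {}f | {}f {}g k _ IHfg _ IHgh].
- apply: rt_step; split; [|split]=> s /Ph Phs.
  + by rewrite (imset_comp f h); apply: Sf.
  + by rewrite (imset_comp g h); apply: Sg.
  + by rewrite (imset_comp f h) (imset_comp g h); apply: Sfg.
- exact: rt_refl.
- exact: rt_trans IHfg IHgh.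
Qed.

End Homotopy.

Section SectionalDistance.
Variables (K K' : sc) (m : nat).
Implicit Types (phis psis : 'I_m -> vert K -> vert K').

Lemma SD_le_homotopic phis psis k :
  (forall i, homotopic (psis i) (phis i)) -> SD_le phis k -> SD_le psis k.
Proof.
move=> psi_phi [Ks [subKs [covKs phisKs]]]; exists Ks; do 2!split=> //.
move=> i l j; have Ks_sub s : Ks j s -> simplex K s by case: (subKs j) => + _; apply.
apply: rt_trans; first exact: homotopic_on_sub Ks_sub (psi_phi i).
apply: rt_trans (phisKs i l j) _.
exact/homotopic_on_sym/(homotopic_on_sub Ks_sub (psi_phi l)).
Qed.

Lemma SD_le_comp_l (K'' : sc) phis (q : vert K' -> vert K'') k :
  simplicial q -> SD_le phis k -> SD_le (fun i => q \o phis i) k.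
Proof.
move=> Sq [Ks [subKs [covKs phisKs]]]; exists Ks; do 2!split=> //.
by move=> i l j; apply: homotopic_on_comp_l.
Qed.

Lemma SD_le_comp_r (K1 : sc) (h : vert K1 -> vert K) phis k :
  face_closed K1 -> simplicial h ->
  SD_le phis k -> SD_le (fun i => phis i \o h) k.
Proof.
move=> faceK1 Sh [Ks [subKs [covKs phisKs]]].
exists (fun j (s : {set vert K1}) => simplex K1 s && Ks j (h @: s)); split; last split.
- move=> j; split=> [s /andP[] // | s t /andP[S1s Kshs] ts t0].
  rewrite (faceK1 _ _ S1s ts t0); apply: (proj2 (subKs j)) Kshs _ _; first exact: imsetS.
  by case/set0Pn: t0 => x xt; apply/set0Pn; exists (h x); apply: imset_f.
- by move=> s S1s; have [j Ksj] := covKs _ (Sh _ S1s); exists j; rewrite S1s.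
- by move=> i l j; apply: homotopic_on_comp_r (phisKs i l j) => s /andP[].
Qed.

End SectionalDistance.

Lemma eq_SD (K1 K1' K2 K2' : sc) m1 m2 (phis1 : 'I_m1 -> vert K1 -> vert K1')
    (phis2 : 'I_m2 -> vert K2 -> vert K2') :
  (forall k, SD_le phis1 k <-> SD_le phis2 k) -> SD phis1 = SD phis2.
Proof.
move=> eq_le; rewrite /SD (_ : is_SD phis1 = is_SD phis2) //.
apply: functional_extensionality => k; apply: propositional_extensionality.
rewrite /is_SD eq_le; split=> -[le_k min_k]; split=> // k' /eq_le; exact: min_k.
Qed.

Definition powsc_map (K K' : sc) n (f : vert K -> vert K') :
  vert (powsc K n) -> vert (powsc K' n) := fun x => [ffun i => f (x i)].
Arguments powsc_map {K K'} n f x.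

Section Powers.
Variables (K K' : sc) (n : nat).

Lemma powsc_face_closed : face_closed K -> face_closed (powsc K n).
Proof.
move=> faceK s t /andP[_ /forallP Ss] ts t0; apply/andP; split=> //; apply/forallP => i.
apply: faceK (Ss i) _ _; first exact: imsetS.
by case/set0Pn: t0 => x xt; apply/set0Pn; exists (x i); apply: imset_f.
Qed.

Lemma proj_simplicial (i : 'I_n) : simplicial (@proj K n i).
Proof. by move=> s /andP[_ /forallP]; apply. Qed.

Lemma proj_powsc_map (f : vert K -> vert K') (i : 'I_n) :
  proj i \o powsc_map n f = f \o proj i.
Proof. by apply: functional_extensionality => x; rewrite /= /proj ffunE. Qed.

Lemma powsc_map_simplicial (f : vert K -> vert K') :
  simplicial f -> simplicial (powsc_map n f).
Proof.
move=> Sf s /andP[s0 /forallP Ss]; apply/andP; split.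
  by case/set0Pn: s0 => x xs; apply/set0Pn; exists (powsc_map n f x); apply: imset_f.
apply/forallP => i.
have -> : [set (y : {ffun 'I_n -> vert K'}) i | y in powsc_map n f @: s] =
          f @: [set (x : {ffun 'I_n -> vert K}) i | x in s].
  by rewrite -!imset_comp; apply: eq_imset => x /=; rewrite ffunE.
exact/Sf/Ss.
Qed.

End Powers.

Section TopologicalComplexity.
Variables (L L' : sc) (phi : vert L -> vert L') (n : nat).
Hypothesis phi_simplicial : simplicial phi.

Lemma TCmap_right_homotopy_inverse (omega : vert L' -> vert L) :
  face_closed L -> face_closed L' -> simplicial omega ->
  homotopic (phi \o omega) id -> TCmap phi n = TC L' n.
Proof.
move=> faceL faceL' Somega phi_omega; apply: eq_SD => k; split.
- move/(SD_le_comp_r (powsc_face_closed faceL') (powsc_map_simplicial Somega)).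
  apply: SD_le_homotopic => i; rewrite -compA proj_powsc_map compA.
  exact/homotopic_on_sym/(homotopic_on_comp_r (@proj_simplicial L' n i) phi_omega).
- move/(SD_le_comp_r (powsc_face_closed faceL) (powsc_map_simplicial phi_simplicial)).
  by apply: SD_le_homotopic => i; rewrite proj_powsc_map; apply: rt_refl.
Qed.

Lemma TCmap_left_homotopy_inverse (gamma : vert L' -> vert L) :
  simplicial gamma -> homotopic (gamma \o phi) id -> TCmap phi n = TC L n.
Proof.
move=> Sgamma gamma_phi; apply: eq_SD => k; split.
- move/(SD_le_comp_l Sgamma); apply: SD_le_homotopic => i.
  exact/homotopic_on_sym/(homotopic_on_comp_r (@proj_simplicial L n i) gamma_phi).
- exact: SD_le_comp_l.
Qed.

End TopologicalComplexity.

Theorem corollary5p5 (L L' : sc) (phi : vert L -> vert L') (n : nat) :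
  is_sc L -> is_sc L' ->
  (forall y : vert L', exists x : vert L, phi x = y) ->
  finite_fibration phi ->
  2 <= n ->
  [/\ (forall omega : vert L' -> vert L, simplicial omega ->
         homotopic (K:=L') (K':=L') (phi \o omega) id ->
         TCmap phi n = TC L' n),
      (forall gamma : vert L' -> vert L, simplicial gamma ->
         homotopic (K:=L) (K':=L) (gamma \o phi) id ->
         TCmap phi n = TC L n)
    & (strong_equivalence phi ->
         TCmap phi n = TC L n /\ TC L n = TC L' n)].
Proof.
move=> /is_sc_face_closed faceL /is_sc_face_closed faceL' _ [Sphi _] _.
have right_inv omega := @TCmap_right_homotopy_inverse L L' phi n Sphi omega faceL faceL'.
have left_inv gamma := @TCmap_left_homotopy_inverse L L' phi n Sphi gamma.
split=> // -[_ [psi [Spsi [phi_psi psi_phi]]]].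
by rewrite -(left_inv psi Spsi psi_phi) (right_inv psi Spsi phi_psi).
Qed.
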